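(* Let $n\ge 2$ and $d\ge 1$ be integers and let $\mathbf{B}=(B_1,\dots,B_d)\in M_n(\mathbb{C})^d$ be a bistochastic tuple. Let $p\geq q\geq 1$. Then \begin{enumerate} \item $h_{S_p}(\mathbf{B})\leq d^{\frac{p-q}{2}}\, h_{S_q}(\mathbf{B})$, and \item $h_{S_p}(\mathbf{B})\geq \big[h_{S_q}(\mathbf{B})\big]^{p/q}$. \end{enumerate} In particular, for every $p,q\in[1,\infty)$ the notions $h_{S_p}$ and $h_{S_q}$ are equivalent: for every $d$ and every sequence $(\mathbf{B}_m)_m$ of bistochastic $d$-tuples (with $\mathbf{B}_m\in M_{n_m}(\mathbb{C})^d$), one has $\inf_m h_{S_p}(\mathbf{B}_m)>0$ if and only if $\inf_m h_{S_q}(\mathbf{B}_m)>0$.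
   Context: A tuple $\mathbf{B}=(B_1,\dots,B_d)\in M_n(\mathbb{C})^d$ is called bistochastic if $\sum_{i=1}^d B_i^*B_i=\sum_{i=1}^d B_iB_i^*=d\cdot \mathrm{Id}$. For a subspace $V$ of $\mathbb{C}^n$ let $P_V$ denote the orthogonal projector onto $V$, and write $B_i|_{V^\perp,V}=P_V B_i(\mathrm{Id}-P_V)$. For $p\in[1,\infty)$, $\|X\|_{S_p}$ denotes the Schatten-$p$ norm of a matrix $X$ (the $\ell_p$ norm of its singular values). The $S_p$ edge expansion of a bistochastic tuple is $$h_{S_p}(\mathbf{B})=\min_{\substack{V \text{ nonzero subspace of } \mathbb{C}^n,\ \dim V\leq n/2}} \frac{\sum_{i=1}^{d}\|B_i|_{V^\perp,V}\|_{S_p}^p}{d\,\dim V}.$$ *)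

From mathcomp Require Import all_boot all_order all_algebra.
From mathcomp Require Import complex.
From mathcomp Require Import classical_sets reals exp.
Set Implicit Arguments. Unset Strict Implicit. Unset Printing Implicit Defensive.
Import Order.TTheory GRing.Theory Num.Theory.
Local Open Scope ring_scope.
Local Open Scope sesquilinear_scope.

Section SchattenDefs.
Variable R : realType.
Local Notation C := R[i].

Definition adj {m n : nat} (X : 'M[C]_(m, n)) : 'M[C]_(n, m) := X ^t*.

(* Singular values of a square matrix X: square roots of the eigenvalues
   (with multiplicity) of the positive semidefinite Hermitian matrix X^* X,
   obtained from its spectral (unitary) diagonalization. *)
Definition sing_vals {n : nat} (X : 'M[C]_n) : 'rV[R]_n :=
  \row_i Num.sqrt (complex.Re (spectral_diag (adj X *m X) 0 i)).

Definition schatten (p : R) {n : nat} (X : 'M[C]_n) : R :=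
  (\sum_i (sing_vals X 0 i) `^ p) `^ p^-1.

(* Orthogonal projector P_V (acting on column vectors) onto the subspace V of
   C^n spanned by the rows of V (read as vectors of C^n). proj_ortho V is the
   orthogonal projector acting on row vectors; its transpose acts on columns. *)
Definition projV {n : nat} (V : 'M[C]_n) : 'M[C]_n := (proj_ortho V)^T.

Definition restr {n : nat} (V : 'M[C]_n) (B : 'M[C]_n) : 'M[C]_n :=
  projV V *m B *m (1%:M - projV V).

Definition bistochastic {n d : nat} (B : 'I_d -> 'M[C]_n) : Prop :=
  \sum_i adj (B i) *m B i = (d%:R : C)%:M /\
  \sum_i B i *m adj (B i) = (d%:R : C)%:M.

(* S_p edge expansion: the minimum (written as infimum; the minimum is attained)
   over nonzero subspaces V with dim V <= n/2. dim V = \rank V. *)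
Definition hSp (p : R) {n d : nat} (B : 'I_d -> 'M[C]_n) : R :=
  inf [set x : R | exists V : 'M[C]_n,
        [/\ (0 < \rank V)%N, (2 * \rank V <= n)%N &
            x = (\sum_i (schatten p (restr V (B i))) `^ p)
                / (d%:R * (\rank V)%:R)]].

End SchattenDefs.

From mathcomp Require Import all_boot all_order all_algebra.
From mathcomp Require Import complex.
From mathcomp Require Import classical_sets reals exp.
Set Implicit Arguments. Unset Strict Implicit. Unset Printing Implicit Defensive.
Import Order.TTheory GRing.Theory Num.Theory.
Local Open Scope ring_scope.
Local Open Scope sesquilinear_scope.

(* The singular values s of a block P_V B_i (1 - P_V) satisfy s^2 <= d: orthogonal
   projections are contractions and bistochasticity gives
   \sum_i |u B_i^*|^2 = d |u|^2.  Moreover each block has at most dim V nonzero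
   singular values.  Part 1 is then the termwise bound s^p <= d^((p-q)/2) s^q, and
   part 2 is the power-mean inequality \sum a^r <= N (\sum a / N)^r for r = q/p <= 1,
   applied to the at most N = d dim V nonzero terms a = s^p.  Both bounds pass to
   infima over sequences, which gives the equivalence. *)

(* The principal submatrix of [diag_mx D] on the support of [D] is invertible. *)
Lemma card_diag_neq0_le_rank (F : fieldType) n (D : 'rV[F]_n) :
  (#|[set j | D 0%R j != 0%R]| <= \rank (diag_mx D))%N.
Proof.
set J := [set j | D 0%R j != 0%R].
pose f (a : 'I_#|J|) := enum_val a.
have f_inj : injective f := @enum_val_inj _ _.
have subD : rowsub f (colsub f (diag_mx D)) = diag_mx (\row_a D 0 (f a)).
  apply/matrixP => a b; rewrite !mxE (inj_eq f_inj).
  by case: eqP => [->|]; rewrite ?mulr1n ?mulr0n.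
have subD_unit : rowsub f (colsub f (diag_mx D)) \in unitmx.
  rewrite subD unitmxE det_diag unitfE; apply/prodf_neq0 => a _.
  by rewrite mxE; have := enum_valP a; rewrite inE.
rewrite -(mxrank_unit subD_unit).
apply: leq_trans (mxrankS (rowsub_sub _ _)) _.
by rewrite -[in colsub _ (diag_mx D)](mulmx1 (diag_mx D)) -mulmx_colsub mxrankM_maxl.
Qed.

Section GramSpectrum.
Variable C : numClosedFieldType.
Local Notation "''[' u ]" := (dotmx u u) : ring_scope.

Lemma trmxC_mul m n p (A : 'M[C]_(m, n)) (B : 'M[C]_(n, p)) :
  (A *m B) ^t* = B ^t* *m A ^t*.
Proof. by rewrite trmx_mul map_mxM. Qed.

Lemma dotmx_mulmx n p (u : 'rV[C]_n) (M : 'M[C]_(n, p)) :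
  '[u *m M] = (u *m (M *m M ^t*) *m u ^t*) 0 0.
Proof. by rewrite dotmxE trmxC_mul !mulmxA. Qed.

Section OrthoProjector.
Variables (n : nat) (P : 'M[C]_n).
Hypotheses (P_herm : P ^t* = P) (P_idem : P *m P = P).

Lemma orthoprojector_compl_herm : (1%:M - P) ^t* = 1%:M - P.
Proof. by rewrite linearB /= map_mxB trmx1 map_mx1 P_herm. Qed.

Lemma orthoprojector_compl_idem : (1%:M - P) *m (1%:M - P) = 1%:M - P.
Proof. by rewrite mulmxBl mul1mx mulmxBr mulmx1 P_idem subrr subr0. Qed.

(* Pythagoras: [u] splits into [u P] and [u (1 - P)]. *)
Lemma dotmx_orthoprojector_le (u : 'rV[C]_n) : '[u *m P] <= '[u].
Proof.
have sq_proj (Q : 'M[C]_n) : Q ^t* = Q -> Q *m Q = Q ->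
    '[u *m Q] = (u *m Q *m u ^t*) 0 0.
  by move=> Qh Qi; rewrite dotmx_mulmx Qh Qi.
have -> : '[u] = '[u *m P] + '[u *m (1%:M - P)].
  rewrite sq_proj // sq_proj ?orthoprojector_compl_herm ?orthoprojector_compl_idem //.
  have addE (A B : 'M[C]_1) : A 0 0 + B 0 0 = (A + B) 0 0 by rewrite mxE.
  by rewrite dotmxE addE -mulmxDl -mulmxDr [P + _]addrC subrK mulmx1.
by rewrite lerDl dnorm_ge0.
Qed.

End OrthoProjector.

Lemma sum_dotmx_mul_adj n d (B : 'I_d -> 'M[C]_n) (u : 'rV[C]_n) :
  \sum_i (B i) ^t* *m B i = (d%:R : C)%:M ->
  \sum_i '[u *m (B i) ^t*] = d%:R * '[u].
Proof.
move=> sumB; under eq_bigr do rewrite dotmx_mulmx trmxCK.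
by rewrite -summxE -mulmx_suml -mulmx_sumr sumB mul_mx_scalar -scalemxAl mxE dotmxE.
Qed.

Lemma diag_spectral n (A : 'M[C]_n) : A \is normalmx ->
  diag_mx (spectral_diag A) = spectralmx A *m A *m (spectralmx A) ^t*.
Proof.
have Uu := spectral_unitarymx A.
move=> /orthomx_spectralP; set U := spectralmx A => AE.
by rewrite [in RHS]AE invmx_unitary // !mulmxA (unitarymxP Uu) mul1mx mulmxtVK.
Qed.

Section Gram.
Variables (n : nat) (X : 'M[C]_n).
Local Notation U := (spectralmx (X ^t* *m X)).

Lemma diag_spectral_gram :
  diag_mx (spectral_diag (X ^t* *m X)) = (U *m X ^t*) *m (U *m X ^t*) ^t*.
Proof.
rewrite diag_spectral; last by apply/normalmxP; rewrite trmxC_mul trmxCK.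
by rewrite trmxC_mul trmxCK !mulmxA.
Qed.

Lemma spectral_diag_gramE j :
  spectral_diag (X ^t* *m X) 0 j = '[row j U *m X ^t*].
Proof.
have /matrixP/(_ j j) := diag_spectral_gram.
rewrite mxE eqxx mulr1n => ->.
by rewrite dotmxE -row_mul !mxE; apply: eq_bigr => k _; rewrite !mxE.
Qed.

Lemma spectral_diag_gram_ge0 j : 0 <= spectral_diag (X ^t* *m X) 0 j.
Proof. by rewrite spectral_diag_gramE dnorm_ge0. Qed.

Lemma card_spectral_diag_gram_neq0 :
  (#|[set j | spectral_diag (X ^t* *m X) 0%R j != 0%R]| <= \rank X)%N.
Proof.
apply: leq_trans (card_diag_neq0_le_rank _) _.
rewrite diag_spectral_gram trmxC_mul trmxCK.
by apply: leq_trans (mxrankM_maxr _ _) _; apply: mxrankM_maxl.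
Qed.

End Gram.

Lemma spectral_diag_gram_compress_le n d (B : 'I_d -> 'M[C]_n) (P Q : 'M[C]_n) i j :
  P ^t* = P -> P *m P = P -> Q ^t* = Q -> Q *m Q = Q ->
  \sum_k (B k) ^t* *m B k = (d%:R : C)%:M ->
  spectral_diag ((P *m B i *m Q) ^t* *m (P *m B i *m Q)) 0 j <= d%:R.
Proof.
move=> P_herm P_idem Q_herm Q_idem sumB.
rewrite spectral_diag_gramE; set U := spectralmx _.
have /row_unitarymxP/(_ j j) : U \is unitarymx := spectral_unitarymx _.
rewrite eqxx mulr1n => u_unit.
rewrite !trmxC_mul P_herm Q_herm !mulmxA.
apply: le_trans (dotmx_orthoprojector_le P_herm P_idem _) _.
apply: (@le_trans _ _ (\sum_k '[row j U *m Q *m (B k) ^t*])).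
  by rewrite (bigD1 i) //= lerDl sumr_ge0 // => k _; apply: dnorm_ge0.
rewrite sum_dotmx_mul_adj // -[X in _ <= X]mulr1 ler_wpM2l ?ler0n //.
by rewrite -u_unit dotmx_orthoprojector_le.
Qed.

End GramSpectrum.

(* [1 - P] annihilates [V^*], so [P^* = P P^*], whose right-hand side is Hermitian. *)
Lemma proj_ortho_herm (C : numClosedFieldType) p n (V : 'M[C]_(p, n)) :
  (proj_ortho V) ^t* = proj_ortho V.
Proof.
set P := proj_ortho V.
have compl_orth : (1%:M - P) *m V ^t* = 0.
  by have := proj_ortho_compl_sub V 1%:M; rewrite mul1mx => /orthomx1P.
have [D PE] : exists D, P = D *m V.
  by have /submxP [D DE] := proj_ortho_sub V 1%:M; exists D; rewrite -DE mul1mx.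
have PPadj : P ^t* = P *m P ^t*.
  apply/eqP; rewrite -subr_eq0 -{1}[P ^t*]mul1mx -mulmxBl.
  by rewrite {2}PE trmxC_mul mulmxA compl_orth mul0mx.
have := congr1 (fun M => M ^t*) PPadj; rewrite trmxCK trmxC_mul trmxCK => PPadj'.
by rewrite PPadj -PPadj'.
Qed.

Section SingularValues.
Variable R : realType.
Local Notation C := R[i].

Section Projector.
Variables (n : nat) (V : 'M[C]_n).

Lemma projV_herm : (projV V) ^t* = projV V.
Proof. by rewrite /projV trmxK -[in RHS]proj_ortho_herm map_trmx trmxK. Qed.

Lemma projV_idem : projV V *m projV V = projV V.
Proof. by rewrite /projV -trmx_mul proj_ortho_proj. Qed.

Lemma rank_projV : \rank (projV V) = \rank V.
Proof. by rewrite /projV mxrank_tr; apply: (proj_orthoE V).1. Qed.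

End Projector.

Lemma sing_vals_ge0 n (X : 'M[C]_n) j : 0 <= sing_vals X 0 j.
Proof. by rewrite mxE sqrtr_ge0. Qed.

Lemma sing_vals_sqrE n (X : 'M[C]_n) j :
  (sing_vals X 0 j ^+ 2)%:C%C = spectral_diag (adj X *m X) 0 j.
Proof.
have lam_ge0 := spectral_diag_gram_ge0 X j.
by rewrite mxE sqr_sqrtr -?ler0c RRe_real ?ger0_real.
Qed.

Lemma sing_vals_restr_sqr_le n d (B : 'I_d -> 'M[C]_n) (V : 'M[C]_n) i j :
  \sum_k adj (B k) *m B k = (d%:R : C)%:M ->
  sing_vals (restr V (B i)) 0 j ^+ 2 <= d%:R.
Proof.
move=> sumB; rewrite -lecR rmorph_nat sing_vals_sqrE.
apply: spectral_diag_gram_compress_le sumB.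
- exact: projV_herm.
- exact: projV_idem.
- exact: orthoprojector_compl_herm (projV_herm V).
- exact: orthoprojector_compl_idem (projV_idem V).
Qed.

Lemma card_sing_vals_restr_neq0 n (V B : 'M[C]_n) :
  (#|[set j | sing_vals (restr V B) 0%R j != 0%R]| <= \rank V)%N.
Proof.
set X := restr V B.
have rankX : (\rank X <= \rank V)%N.
  by rewrite -(rank_projV V) /X /restr -mulmxA mxrankM_maxl.
apply: (leq_trans _ (leq_trans (card_spectral_diag_gram_neq0 X) rankX)).
apply: subset_leq_card; apply/fintype.subsetP => j; rewrite !inE.
by apply: contra => /eqP lam0; rewrite mxE /adj lam0 sqrtr0.
Qed.

Lemma schatten_powE (p : R) n (X : 'M[C]_n) : 0 < p ->
  schatten p X `^ p = \sum_j sing_vals X 0 j `^ p.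
Proof.
move=> p_gt0; rewrite /schatten -powRrM mulVf ?gt_eqF // powRr1 //.
by apply: sumr_ge0 => j _; apply: powR_ge0.
Qed.

End SingularValues.

Section PowerInequalities.
Variable R : realType.

Lemma powR_le_sqr_bound (s D p q : R) : 0 <= s -> s ^+ 2 <= D -> 0 < q -> q <= p ->
  s `^ p <= D `^ ((p - q) / 2) * s `^ q.
Proof.
move=> s_ge0 sD q_gt0 qp.
have [->|s_neq0] := eqVneq s 0.
  by rewrite powR0 ?gt_eqF ?(lt_le_trans q_gt0) // mulr_ge0 ?powR_ge0.
rewrite -{1}(subrK q p) powRD ?s_neq0 ?implybT // ler_wpM2r ?powR_ge0 //.
have pq2 : p - q = 2%:R * ((p - q) / 2) by rewrite mulrC divfK ?pnatr_eq0.
rewrite {1}pq2 powRrM powR_mulrn // ge0_ler_powR ?nnegrE ?sqr_ge0 //.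
- by rewrite divr_ge0 ?subr_ge0.
- exact: le_trans (sqr_ge0 s) sD.
Qed.

(* Young's inequality with the conjugate exponents 1/r and 1/(1-r). *)
Lemma powR_le_tangent (t r : R) : 0 <= t -> 0 < r <= 1 -> t `^ r <= r * t + (1 - r).
Proof.
move=> t_ge0 /andP[r_gt0 r_le1].
have [->|r_neq1] := eqVneq r 1; first by rewrite mul1r subrr addr0 powRr1.
have r_lt1 : r < 1 by rewrite lt_neqAle r_neq1.
have := @conjugate_powR R (t `^ r) 1 r^-1 (1 - r)^-1 (powR_ge0 _ _) ler01.
rewrite !invr_gt0 subr_gt0 r_gt0 r_lt1 !invrK addrC subrK => /(_ isT isT erefl).
by rewrite mulr1 -powRrM mulfV ?gt_eqF // powRr1 // powR1 mul1r [t * r]mulrC.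
Qed.

(* Concavity of [t ^ r]: each term is bounded by the tangent line at the mean
   [m = (\sum a) / N], and the constant parts add up to at most [N]. *)
Lemma sum_powR_le_mean (I : finType) (a : I -> R) (r N : R) :
  (forall i, 0 <= a i) -> 0 < r <= 1 -> 0 < N ->
  \sum_i ((a i != 0)%:R : R) <= N ->
  \sum_i a i `^ r <= N * ((\sum_i a i) / N) `^ r.
Proof.
move=> a_ge0 /andP[r_gt0 r_le1] N_gt0 supp_le.
set T := \sum_i a i.
have [T0|T_neq0] := eqVneq T 0.
  have a0 i : a i = 0 by apply: (psumr_eq0P (fun j _ => a_ge0 j) T0).
  rewrite big1 => [|i _]; first by rewrite mulr_ge0 ?powR_ge0 ?ltW.
  by rewrite a0 powR0 ?gt_eqF.
set m := T / N.
have m_gt0 : 0 < m by rewrite divr_gt0 // lt_def T_neq0 sumr_ge0.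
have term_le i : a i `^ r <= m `^ r * (r * (a i / m) + (1 - r) * (a i != 0)%:R).
  have [->|ai_neq0] := eqVneq (a i) 0.
    by rewrite powR0 ?gt_eqF // mul0r !mulr0 addr0 mulr0.
  have am_ge0 : 0 <= a i / m by rewrite divr_ge0 ?a_ge0 ?ltW.
  rewrite mulr1 -{1}(divfK (lt0r_neq0 m_gt0) (a i)) (powRM _ am_ge0 (ltW m_gt0)).
  by rewrite mulrC ler_pM2l ?powR_gt0 // powR_le_tangent // r_gt0.
apply: le_trans (ler_sum _ (fun i _ => term_le i)) _.
rewrite -mulr_sumr big_split /= -!mulr_sumr -mulr_suml.
have -> : (\sum_i a i) / m = N by rewrite /m invf_div mulrC divfK.
rewrite mulrC ler_wpM2r ?powR_ge0 //.
apply: (@le_trans _ _ (r * N + (1 - r) * N)).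
  by rewrite lerD2l ler_wpM2l // subr_ge0.
by rewrite -mulrDl addrC subrK mul1r.
Qed.

End PowerInequalities.

Local Open Scope classical_set_scope.

Section EdgeExpansion.
Variable R : realType.
Local Notation C := R[i].
Variables (n d : nat) (B : 'I_d -> 'M[C]_n).

Definition expansion_ratio (p : R) (V : 'M[C]_n) : R :=
  (\sum_i (schatten p (restr V (B i))) `^ p) / (d%:R * (\rank V)%:R).

Lemma expansion_ratio_ge0 p V : 0 <= expansion_ratio p V.
Proof.
by rewrite divr_ge0 ?mulr_ge0 ?ler0n // sumr_ge0 // => i _; apply: powR_ge0.
Qed.

Lemma hSp_le_ratio p V : (0 < \rank V)%N -> (2 * \rank V <= n)%N ->
  hSp p B <= expansion_ratio p V.
Proof.
move=> rV_gt0 rV_le; apply: ge_inf; last by exists V.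
by exists 0 => _ [W [_ _ ->]]; apply: expansion_ratio_ge0.
Qed.

Lemma hSp_ge p c : (2 <= n)%N ->
  (forall V, (0 < \rank V)%N -> (2 * \rank V <= n)%N -> c <= expansion_ratio p V) ->
  c <= hSp p B.
Proof.
move=> n_ge2 ratio_ge; apply: lb_le_inf => [|_ [V [rV_gt0 rV_le ->]]]; last first.
  exact: ratio_ge.
have n_gt0 : (0 < n)%N by apply: leq_trans n_ge2.
pose L : 'M[C]_n := delta_mx (Ordinal n_gt0) (Ordinal n_gt0).
have rL : \rank L = 1%N by apply: mxrank_delta.
by exists (expansion_ratio p L), L; split; rewrite // rL.
Qed.

Lemma hSp_ge0 p : (2 <= n)%N -> 0 <= hSp p B.
Proof. by move=> n_ge2; apply: hSp_ge => // V _ _; apply: expansion_ratio_ge0. Qed.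

Lemma expansion_ratio_le_powR_d p q V : bistochastic B -> 0 < q -> q <= p ->
  expansion_ratio p V <= d%:R `^ ((p - q) / 2) * expansion_ratio q V.
Proof.
case=> sumB _ q_gt0 qp; have p_gt0 := lt_le_trans q_gt0 qp.
rewrite /expansion_ratio mulrA ler_wpM2r ?invr_ge0 ?mulr_ge0 ?ler0n // mulr_sumr.
apply: ler_sum => i _; rewrite !schatten_powE // mulr_sumr.
apply: ler_sum => j _; apply: powR_le_sqr_bound => //.
- exact: sing_vals_ge0.
- exact: sing_vals_restr_sqr_le.
Qed.

Lemma expansion_ratio_le_powR p q V : (0 < \rank V)%N -> (0 < d)%N ->
  0 < q -> q <= p -> expansion_ratio q V <= expansion_ratio p V `^ (q / p).
Proof.
move=> rV_gt0 d_gt0 q_gt0 qp; have p_gt0 := lt_le_trans q_gt0 qp.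
pose a (ij : 'I_d * 'I_n) := sing_vals (restr V (B ij.1)) 0 ij.2 `^ p.
have a_ge0 ij : 0 <= a ij by apply: powR_ge0.
set N : R := d%:R * (\rank V)%:R.
have N_gt0 : 0 < N by rewrite mulr_gt0 ?ltr0n.
have ratioE s : 0 < s -> expansion_ratio s V =
    (\sum_ij sing_vals (restr V (B ij.1)) 0 ij.2 `^ s) / N.
  move=> s_gt0; rewrite /expansion_ratio; congr (_ / _).
  by under eq_bigr do rewrite schatten_powE //; rewrite pair_bigA.
have row_supp_le i : \sum_j ((a (i, j) != 0)%:R : R) <= (\rank V)%:R.
  rewrite -natr_sum ler_nat (leq_trans _ (card_sing_vals_restr_neq0 V (B i))) //.
  rewrite -sum1_card [X in (_ <= X)%N]big_mkcond /=; apply: leq_sum => j _.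
  by rewrite inE /a /= powR_eq0 (gt_eqF p_gt0) andbT; case: ifP.
have supp_le : \sum_ij ((a ij != 0)%:R : R) <= N.
  rewrite -(pair_bigA _ (fun i j => ((a (i, j) != 0)%:R : R))) /=.
  apply: le_trans (ler_sum _ (fun i _ => row_supp_le i)) _.
  by rewrite /N sumr_const card_ord mulr_natl.
rewrite (ratioE q q_gt0) (ratioE p p_gt0).
have powRq x : x `^ q = (x `^ p) `^ (q / p).
  by rewrite -powRrM [p * _]mulrC divfK ?lt0r_neq0.
under eq_bigr do rewrite powRq.
have r_bounds : 0 < q / p <= 1 by rewrite divr_gt0 //= ler_pdivrMr // mul1r.
rewrite ler_pdivrMr // [_ * N]mulrC.
exact: sum_powR_le_mean a_ge0 r_bounds N_gt0 supp_le.
Qed.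

Lemma hSp_le_powR_d_hSp p q : (2 <= n)%N -> (0 < d)%N -> bistochastic B ->
  0 < q -> q <= p -> hSp p B <= d%:R `^ ((p - q) / 2) * hSp q B.
Proof.
move=> n_ge2 d_gt0 bistB q_gt0 qp.
have c_gt0 : 0 < (d%:R : R) `^ ((p - q) / 2) by rewrite powR_gt0 ?ltr0n.
rewrite -ler_pdivrMl //; apply: hSp_ge => // V rV_gt0 rV_le.
rewrite ler_pdivrMl //; apply: le_trans (hSp_le_ratio p rV_gt0 rV_le) _.
exact: expansion_ratio_le_powR_d.
Qed.

Lemma powR_hSp_le_hSp p q : (2 <= n)%N -> (0 < d)%N -> 0 < q -> q <= p ->
  hSp q B `^ (p / q) <= hSp p B.
Proof.
move=> n_ge2 d_gt0 q_gt0 qp; have p_gt0 := lt_le_trans q_gt0 qp.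
apply: hSp_ge => // V rV_gt0 rV_le.
have powRK : (expansion_ratio p V `^ (q / p)) `^ (p / q) = expansion_ratio p V.
  rewrite -powRrM mulrA divfK ?lt0r_neq0 // divff ?lt0r_neq0 //.
  by rewrite powRr1 ?expansion_ratio_ge0.
rewrite -powRK ge0_ler_powR ?nnegrE ?hSp_ge0 ?powR_ge0 ?divr_ge0 ?(ltW p_gt0) ?(ltW q_gt0) //.
apply: le_trans (hSp_le_ratio q rV_gt0 rV_le) _.
exact: expansion_ratio_le_powR.
Qed.

End EdgeExpansion.

Lemma inf_seq_gt0P (R : realType) (u : nat -> R) : (forall m, 0 <= u m) ->
  0 < inf [set u m | m in [set: nat]] <-> exists2 e, 0 < e & forall m, e <= u m.
Proof.
move=> u_ge0; split => [inf_gt0 | [e e_gt0 e_le]].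
  exists (inf [set u m | m in [set: nat]]) => // m.
  by apply: ge_inf; [exists 0 => _ [k _ <-] | exists m].
apply: lt_le_trans e_gt0 _; apply: lb_le_inf => [|_ [m _ <-]]; last exact: e_le.
by exists (u 0%N), 0%N.
Qed.

Lemma hSp_seq_inf_gt0_equiv (R : realType) (p q : R) (d : nat) (nm : nat -> nat)
    (B : forall m, 'I_d -> 'M[R[i]]_(nm m)) :
  0 < q -> q <= p -> (0 < d)%N ->
  (forall m, (2 <= nm m)%N) -> (forall m, bistochastic (B m)) ->
  0 < inf [set hSp p (B m) | m in [set: nat]] <->
  0 < inf [set hSp q (B m) | m in [set: nat]].
Proof.
move=> q_gt0 qp d_gt0 n_ge2 bistB; have p_gt0 := lt_le_trans q_gt0 qp.
have c_gt0 : 0 < (d%:R : R) `^ ((p - q) / 2) by rewrite powR_gt0 ?ltr0n.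
have hSp_seq_ge0 s m : 0 <= hSp s (B m) by apply: hSp_ge0.
split=> /(inf_seq_gt0P (hSp_seq_ge0 _))[e e_gt0 e_le];
  apply/(inf_seq_gt0P (hSp_seq_ge0 _)).
  exists (e / (d%:R `^ ((p - q) / 2))) => [|m]; first by rewrite divr_gt0.
  rewrite ler_pdivrMr // mulrC; apply: le_trans (e_le m) _.
  exact: hSp_le_powR_d_hSp.
exists (e `^ (p / q)) => [|m]; first exact: powR_gt0.
apply: le_trans _ (powR_hSp_le_hSp (B m) (n_ge2 m) d_gt0 q_gt0 qp).
by rewrite ge0_ler_powR ?nnegrE ?hSp_seq_ge0 ?e_le ?divr_ge0 ?(ltW p_gt0) ?(ltW q_gt0) ?(ltW e_gt0).
Qed.

Theorem theorem1 :
  (forall (R : realType) (n d : nat) (B : 'I_d -> 'M[R[i]]_n) (p q : R),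
      (2 <= n)%N -> (1 <= d)%N -> bistochastic B ->
      1 <= q -> q <= p ->
      hSp p B <= (d%:R) `^ ((p - q) / 2) * hSp q B /\
      (hSp q B) `^ (p / q) <= hSp p B) /\
  (forall (R : realType) (p q : R) (d : nat) (nm : nat -> nat)
          (B : forall m : nat, 'I_d -> 'M[R[i]]_(nm m)),
      1 <= p -> 1 <= q -> (1 <= d)%N ->
      (forall m, (2 <= nm m)%N) -> (forall m, bistochastic (B m)) ->
      (0 < inf [set hSp p (B m) | m in [set: nat]] <->
       0 < inf [set hSp q (B m) | m in [set: nat]])).
Proof.
split=> [R n d B p q n_ge2 d_ge1 bistB q_ge1 qp|R p q d nm B p_ge1 q_ge1 d_ge1 n_ge2 bistB].
  have q_gt0 := lt_le_trans ltr01 q_ge1.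
  by split; [apply: hSp_le_powR_d_hSp | apply: powR_hSp_le_hSp].
have [qp|/ltW pq] := lerP q p.
  exact: hSp_seq_inf_gt0_equiv (lt_le_trans ltr01 q_ge1) qp d_ge1 n_ge2 bistB.
apply: iff_sym.
exact: hSp_seq_inf_gt0_equiv (lt_le_trans ltr01 p_ge1) pq d_ge1 n_ge2 bistB.
Qed.
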